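(* In the 3-body problem in ${\bf H}^2$ with masses $m_1,m_2,m_3>0$, let ${\bf q}_i(t)=(\rho_i\cos(\omega t+\alpha_i),\rho_i\sin(\omega t+\alpha_i), z_i)$, $i=1,2,3$, with constants $\omega\ne0$, $\alpha_i$, $\rho_i\ge0$, $z_i=(\rho_i^2+1)^{1/2}$, be an elliptic relative equilibrium in which the three bodies form an equilateral triangle (all mutual hyperbolic distances equal) at all times. Then $z_1=z_2=z_3$, i.e. the bodies move on the same circle whose plane is orthogonal to the rotation axis, and $m_1=m_2=m_3$.
   Context: The $n$-body problem in ${\bf H}^2$ (Weierstrass model): with the Lorentz inner product ${\bf a}\boxdot{\bf b}=a_xb_x+a_yb_y-a_zb_z$ on $\mathbb R^3$, ${\bf H}^2=\{(x,y,z): x^2+y^2-z^2=-1,\ z>0\}$. Bodies of masses $m_1,\dots,m_n>0$ have positions ${\bf q}_i=(x_i,y_i,z_i)\in{\bf H}^2$ and satisfy $$\ddot{\bf q}_i=\sum_{j\ne i}\frac{m_j[{\bf q}_j+({\bf q}_i\boxdot{\bf q}_j){\bf q}_i]}{[({\bf q}_i\boxdot{\bf q}_j)^2-1]^{3/2}}+(\dot{\bf q}_i\boxdot\dot{\bf q}_i){\bf q}_i,\qquad {\bf q}_i\boxdot{\bf q}_i=-1,\ \ {\bf q}_i\boxdot\dot{\bf q}_i=0,$$ $i=1,\dots,n$, defined only for collisionless configurations. The angular momentum $\sum_i m_i{\bf q}_i\boxtimes\dot{\bf q}_i$, where ${\bf a}\boxtimes{\bf b}=(a_yb_z-a_zb_y,\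 a_zb_x-a_xb_z,\ a_yb_x-a_xb_y)$, is a first integral. The hyperbolic distance is $d({\bf a},{\bf b})=\cosh^{-1}(-{\bf a}\boxdot{\bf b})$. An elliptic relative equilibrium in ${\bf H}^2$ is a solution with $x_i=\rho_i\cos(\omega t+\alpha_i)$, $y_i=\rho_i\sin(\omega t+\alpha_i)$, $z_i=(\rho_i^2+1)^{1/2}$, constants $\omega,\alpha_i,\rho_i$. *)

From Stdlib Require Import Reals List.
Import ListNotations.
Open Scope R_scope.

Record V3 := mkV { vx : R; vy : R; vz : R }.

Definition vadd (a b : V3) : V3 := mkV (vx a + vx b) (vy a + vy b) (vz a + vz b).
Definition vscale (c : R) (a : V3) : V3 := mkV (c * vx a) (c * vy a) (c * vz a).
Definition vzero : V3 := mkV 0 0 0.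

Definition ldot (a b : V3) : R := vx a * vx b + vy a * vy b - vz a * vz b.

(* Lorentz cross product (used for angular momentum; not needed in the statement) *)
Definition lcross (a b : V3) : V3 :=
  mkV (vy a * vz b - vz a * vy b) (vz a * vx b - vx a * vz b) (vy a * vx b - vx a * vy b).

Definition acosh (x : R) : R := ln (x + sqrt (x * x - 1)).

Definition hdist (a b : V3) : R := acosh (- ldot a b).

Definition has_deriv (f f' : R -> V3) : Prop :=
  forall t,
    derivable_pt_lim (fun s => vx (f s)) t (vx (f' t)) /\
    derivable_pt_lim (fun s => vy (f s)) t (vy (f' t)) /\
    derivable_pt_lim (fun s => vz (f s)) t (vz (f' t)).

Definition force (n : nat) (m : nat -> R) (q : nat -> V3) (i : nat) : V3 :=
  fold_right vadd vzero
    (map (fun j =>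
            if Nat.eq_dec j i then vzero
            else vscale (m j / Rpower (ldot (q i) (q j) ^ 2 - 1) (3/2))
                        (vadd (q j) (vscale (ldot (q i) (q j)) (q i))))
         (seq 0 n)).

(* q is a (collisionless, globally defined) solution of the n-body problem in H^2 *)
Definition nbody_solution (n : nat) (m : nat -> R) (q : nat -> R -> V3) : Prop :=
  exists v a : nat -> R -> V3,
    (forall i, (i < n)%nat -> has_deriv (q i) (v i) /\ has_deriv (v i) (a i)) /\
    (forall t i, (i < n)%nat ->
       ldot (q i t) (q i t) = -1 /\ vz (q i t) > 0 /\ ldot (q i t) (v i t) = 0) /\
    (forall t i j, (i < n)%nat -> (j < n)%nat -> i <> j ->
       ldot (q i t) (q j t) ^ 2 - 1 > 0) /\
    (forall t i, (i < n)%nat ->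
       a i t = vadd (force n m (fun k => q k t) i)
                    (vscale (ldot (v i t) (v i t)) (q i t))).

Definition ere_pos (omega : R) (alpha rho : nat -> R) (i : nat) (t : R) : V3 :=
  mkV (rho i * cos (omega * t + alpha i))
      (rho i * sin (omega * t + alpha i))
      (sqrt (rho i ^ 2 + 1)).

From Stdlib Require Import Reals Lra Psatz Lia.
Open Scope R_scope.

(* Freeze the motion at one instant and write p_i for the positions, c < -1 for
   the common Lorentz product of any two of them, k_j = m_j / (c^2-1)^(3/2),
   K = k_0+k_1+k_2, T = sum_j k_j p_j and w = omega^2.  Since the orbits are
   horizontal circles of angular speed omega, the equations of motion collapse
   to the "balance" identities   T = -L_i p_i + w z_i e_z   (i = 0,1,2),
   with L_i = w z_i^2 + c K - (c+1) k_i.  The rest is algebra on the hyperboloid: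
   - if every L_i is nonzero, the three horizontal parts are parallel to that of
     T, so the determinant of (p_0,p_1,p_2) vanishes, while its square equals
     (c+1)^2 (1-2c) > 0 by the Lorentz Gram identity;
   - otherwise T is vertical, and every body with L_i <> 0 sits at the vertex
     e_z; two bodies at e_z would have product -1, and exactly one is excluded
     by a short computation on the z-components;
   - if every L_i vanishes, the z-components give z_0 = z_1 = z_2, and then the
     L_i = 0 give k_0 = k_1 = k_2, i.e. equal masses. *)

Lemma V3_ext (a b : V3) : vx a = vx b -> vy a = vy b -> vz a = vz b -> a = b.
Proof. destruct a, b; cbn; intros -> -> ->; reflexivity. Qed.

Lemma derivable_pt_lim_affine (om a t : R) :
  derivable_pt_lim (fun s => om * s + a) t om.
Proof.
  assert (H : derivable_pt_lim (mult_real_fct om id + fct_cte a) t (om * 1 + 0)).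
  { apply derivable_pt_lim_plus.
    - apply derivable_pt_lim_scal, derivable_pt_lim_id.
    - apply derivable_pt_lim_const. }
  rewrite Rmult_1_r, Rplus_0_r in H; exact H.
Qed.

Lemma derivable_pt_lim_rcos (r om a t : R) :
  derivable_pt_lim (fun s => r * cos (om * s + a)) t (r * (- sin (om * t + a) * om)).
Proof.
  apply (derivable_pt_lim_scal (comp cos (fun s => om * s + a))).
  apply derivable_pt_lim_comp; [apply derivable_pt_lim_affine | apply derivable_pt_lim_cos].
Qed.

Lemma derivable_pt_lim_rsin (r om a t : R) :
  derivable_pt_lim (fun s => r * sin (om * s + a)) t (r * (cos (om * t + a) * om)).
Proof.
  apply (derivable_pt_lim_scal (comp sin (fun s => om * s + a))).
  apply derivable_pt_lim_comp; [apply derivable_pt_lim_affine | apply derivable_pt_lim_sin].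
Qed.

Lemma ere_velocity (om : R) (al rh : nat -> R) (i : nat) (v : R -> V3) :
  has_deriv (ere_pos om al rh i) v -> forall t,
  v t = mkV (rh i * (- sin (om * t + al i) * om)) (rh i * (cos (om * t + al i) * om)) 0.
Proof.
  intros Hv t; destruct (Hv t) as [Hx [Hy Hz]].
  apply V3_ext; cbn.
  - exact (uniqueness_limite _ _ _ _ Hx (derivable_pt_lim_rcos _ _ _ _)).
  - exact (uniqueness_limite _ _ _ _ Hy (derivable_pt_lim_rsin _ _ _ _)).
  - exact (uniqueness_limite _ _ _ _ Hz (derivable_pt_lim_const _ _)).
Qed.

Lemma ere_speed_sq (om : R) (al rh : nat -> R) (i : nat) (v : R -> V3) (t : R) :
  has_deriv (ere_pos om al rh i) v -> ldot (v t) (v t) = om * om * rh i ^ 2.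
Proof.
  intros Hv; rewrite (ere_velocity om al rh i v Hv t); unfold ldot; cbn.
  pose proof (sin2_cos2 (om * t + al i)) as Hsc; unfold Rsqr in Hsc; nra.
Qed.

Lemma ere_acceleration (om : R) (al rh : nat -> R) (i : nat) (v a : R -> V3) :
  has_deriv (ere_pos om al rh i) v -> has_deriv v a -> forall t,
  a t = mkV (- (om * om) * vx (ere_pos om al rh i t))
            (- (om * om) * vy (ere_pos om al rh i t)) 0.
Proof.
  intros Hv Ha t; pose proof (ere_velocity om al rh i v Hv) as E.
  destruct (Ha t) as [Hx [Hy Hz]].
  apply V3_ext; cbn.
  - apply (uniqueness_limite _ _ _ _ Hx).
    apply (derivable_pt_lim_ext (fun s => (- (rh i * om)) * sin (om * s + al i))).
    { intro s; rewrite E; cbn; ring. }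
    replace (- (om * om) * (rh i * cos (om * t + al i)))
      with (- (rh i * om) * (cos (om * t + al i) * om)) by ring.
    apply derivable_pt_lim_rsin.
  - apply (uniqueness_limite _ _ _ _ Hy).
    apply (derivable_pt_lim_ext (fun s => (rh i * om) * cos (om * s + al i))).
    { intro s; rewrite E; cbn; ring. }
    replace (- (om * om) * (rh i * sin (om * t + al i)))
      with (rh i * om * (- sin (om * t + al i) * om)) by ring.
    apply derivable_pt_lim_rcos.
  - apply (uniqueness_limite _ _ _ _ Hz).
    apply (derivable_pt_lim_ext (fun _ => 0)); [intro s; rewrite E; reflexivity|].
    apply derivable_pt_lim_const.
Qed.

Definition on_hyperboloid (p : V3) : Prop := ldot p p = -1 /\ 0 < vz p.

Definition e_z : V3 := mkV 0 0 1.

Lemma ldot_comm (a b : V3) : ldot a b = ldot b a.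
Proof. unfold ldot; ring. Qed.

Lemma ldot_e_z (p : V3) : ldot e_z p = - vz p.
Proof. unfold ldot; cbn; ring. Qed.

Lemma ldot_hyperboloid_neg (u w : V3) :
  on_hyperboloid u -> on_hyperboloid w -> ldot u w < 0.
Proof.
  destruct u as [a b c], w as [d e f]; unfold on_hyperboloid, ldot; cbn.
  intros [Hu Hc] [Hw Hf].
  assert (Hcs : (a * d + b * e) ^ 2 <= (a ^ 2 + b ^ 2) * (d ^ 2 + e ^ 2)).
  { pose proof (pow2_ge_0 (a * e - b * d)); nra. }
  assert (Hlt : (a * d + b * e) ^ 2 < (c * f) ^ 2) by nra.
  destruct (Rlt_or_le (a * d + b * e) (c * f)) as [Hl | Hl]; [lra|].
  assert ((c * f) ^ 2 <= (a * d + b * e) ^ 2) by (apply pow_incr; nra).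
  lra.
Qed.

Lemma acosh_inj (u w : R) : 1 < u -> 1 < w -> acosh u = acosh w -> u = w.
Proof.
  unfold acosh; intros Hu Hw H.
  pose proof (sqrt_pos (u * u - 1)); pose proof (sqrt_pos (w * w - 1)).
  apply ln_inv in H; try lra.
  destruct (Rtotal_order u w) as [Hlt | [Heq | Hgt]]; auto.
  - assert (sqrt (u * u - 1) < sqrt (w * w - 1)) by (apply sqrt_lt_1; nra); lra.
  - assert (sqrt (w * w - 1) < sqrt (u * u - 1)) by (apply sqrt_lt_1; nra); lra.
Qed.

Definition equilateral (q : nat -> V3) (c : R) : Prop :=
  forall i j, (i < 3)%nat -> (j < 3)%nat -> i <> j -> ldot (q i) (q j) = c.

Lemma equal_distances_equilateral (q : nat -> V3) :
  (forall i, (i < 3)%nat -> on_hyperboloid (q i)) ->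
  (forall i j, (i < 3)%nat -> (j < 3)%nat -> i <> j -> ldot (q i) (q j) ^ 2 - 1 > 0) ->
  hdist (q 0%nat) (q 1%nat) = hdist (q 0%nat) (q 2%nat) ->
  hdist (q 1%nat) (q 2%nat) = hdist (q 0%nat) (q 1%nat) ->
  equilateral q (ldot (q 0%nat) (q 1%nat)) /\ ldot (q 0%nat) (q 1%nat) < -1.
Proof.
  intros Hh Hcol D1 D2.
  assert (Hlt : forall i j, (i < 3)%nat -> (j < 3)%nat -> i <> j -> ldot (q i) (q j) < -1).
  { intros i j Hi Hj Hij.
    pose proof (ldot_hyperboloid_neg _ _ (Hh i Hi) (Hh j Hj)).
    pose proof (Hcol i j Hi Hj Hij); nra. }
  assert (L01 : ldot (q 0%nat) (q 1%nat) < -1) by (apply Hlt; lia).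
  assert (L02 : ldot (q 0%nat) (q 2%nat) < -1) by (apply Hlt; lia).
  assert (L12 : ldot (q 1%nat) (q 2%nat) < -1) by (apply Hlt; lia).
  unfold hdist in D1, D2.
  apply acosh_inj in D1; [| lra | lra].
  apply acosh_inj in D2; [| lra | lra].
  split; [| exact L01].
  intros [|[|[|i]]] [|[|[|j]]] Hi Hj Hij; try lia; try congruence;
    rewrite ?(ldot_comm (q 1%nat) (q 0%nat)), ?(ldot_comm (q 2%nat) _); lra.
Qed.

(* The coefficient m_j / (c^2-1)^(3/2) of body j in the force when all
   mutual Lorentz products equal c. *)
Definition weight (m : nat -> R) (c : R) (j : nat) : R := m j / Rpower (c ^ 2 - 1) (3 / 2).

Definition wsum3 (k : nat -> R) (q : nat -> V3) : V3 :=
  vadd (vscale (k 0%nat) (q 0%nat)) (vadd (vscale (k 1%nat) (q 1%nat)) (vscale (k 2%nat) (q 2%nat))).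

Definition ksum3 (k : nat -> R) : R := k 0%nat + k 1%nat + k 2%nat.

Lemma weight_pos (m : nat -> R) (c : R) (j : nat) : 0 < m j -> 0 < weight m c j.
Proof. intros Hm; apply Rdiv_lt_0_compat; [exact Hm | apply exp_pos]. Qed.

Lemma weight_inj (m : nat -> R) (c : R) (i j : nat) : weight m c i = weight m c j -> m i = m j.
Proof.
  unfold weight; intros H.
  assert (Hp : Rpower (c ^ 2 - 1) (3 / 2) <> 0) by (apply Rgt_not_eq, exp_pos).
  apply (f_equal (Rmult (Rpower (c ^ 2 - 1) (3 / 2)))) in H.
  field_simplify in H; assumption.
Qed.

Lemma force_equilateral (m : nat -> R) (q : nat -> V3) (c : R) (i : nat) :
  equilateral q c -> (i < 3)%nat ->
  force 3 m q i = vadd (wsum3 (weight m c) q)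
    (vscale (c * ksum3 (weight m c) - (c + 1) * weight m c i) (q i)).
Proof.
  intros Heq Hi; unfold force.
  destruct i as [|[|[|i]]]; [| | | lia];
    cbn [List.seq List.map List.fold_right Nat.eq_dec nat_rec nat_rect sumbool_rec sumbool_rect];
    rewrite !Heq by lia; apply V3_ext; cbn [vx vy vz vadd vscale vzero wsum3];
    unfold ksum3, weight; ring.
Qed.

(* The horizontal circular motion reduces body i's equation to the balance
   identity T = -L_i q_i + w z_i e_z, where L_i = w z_i^2 + cK - (c+1)k_i. *)
Definition balance_coef (w c K k : R) (p : V3) : R := w * vz p ^ 2 + c * K - (c + 1) * k.

Definition balanced (w c K k : R) (T p : V3) : Prop :=
  T = vadd (vscale (- balance_coef w c K k p) p) (mkV 0 0 (w * vz p)).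

Lemma ere_balanced (m : nat -> R) (om : R) (al rh : nat -> R) (c t : R) (i : nat) :
  nbody_solution 3 m (ere_pos om al rh) -> (i < 3)%nat ->
  equilateral (fun j => ere_pos om al rh j t) c ->
  balanced (om * om) c (ksum3 (weight m c)) (weight m c i)
    (wsum3 (weight m c) (fun j => ere_pos om al rh j t)) (ere_pos om al rh i t).
Proof.
  intros [v [a [Hd [_ [_ Hmot]]]]] Hi Heq.
  destruct (Hd i Hi) as [Hv Ha].
  pose proof (Hmot t i Hi) as E.
  rewrite (force_equilateral _ _ _ _ Heq Hi), (ere_speed_sq _ _ _ _ _ t Hv),
    (ere_acceleration _ _ _ _ _ _ Hv Ha) in E.
  set (T := wsum3 _ _) in *.
  assert (Hz : vz (ere_pos om al rh i t) ^ 2 = rh i ^ 2 + 1).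
  { unfold ere_pos; cbn [vz]; rewrite <- Rsqr_pow2, Rsqr_sqrt; nra. }
  unfold balanced, balance_coef; rewrite Hz.
  apply V3_ext; cbn [vx vy vz vadd vscale];
    [ apply (f_equal vx) in E | apply (f_equal vy) in E | apply (f_equal vz) in E ];
    cbn [vx vy vz vadd vscale] in E; nra.
Qed.

Lemma balanced_components (w c K k : R) (T p : V3) :
  balanced w c K k T p ->
  vx T = - balance_coef w c K k p * vx p /\ vy T = - balance_coef w c K k p * vy p /\
  vz T = (w - balance_coef w c K k p) * vz p.
Proof. intros ->; cbn; repeat split; ring. Qed.

Lemma balanced_zero_coef (w c K k : R) (T p : V3) :
  balanced w c K k T p -> balance_coef w c K k p = 0 ->
  vx T = 0 /\ vy T = 0 /\ vz T = w * vz p.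
Proof.
  intros Hb HL; destruct (balanced_components _ _ _ _ _ _ Hb) as [Hx [Hy Hz]].
  rewrite HL in Hx, Hy, Hz; repeat split; lra.
Qed.

Lemma balanced_on_axis (w c K k : R) (T p : V3) :
  on_hyperboloid p -> balanced w c K k T p -> balance_coef w c K k p <> 0 ->
  vx T = 0 -> vy T = 0 -> p = e_z.
Proof.
  intros [Hpp Hzp] Hb HL HTx HTy.
  destruct (balanced_components _ _ _ _ _ _ Hb) as [Hx [Hy _]].
  assert (Hx0 : vx p = 0).
  { destruct (Rmult_integral (balance_coef w c K k p) (vx p)); [lra | contradiction | assumption]. }
  assert (Hy0 : vy p = 0).
  { destruct (Rmult_integral (balance_coef w c K k p) (vy p)); [lra | contradiction | assumption]. }
  unfold ldot in Hpp; rewrite Hx0, Hy0 in Hpp.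
  apply V3_ext; cbn; nra.
Qed.

(* One body at the vertex and the other two with zero coefficient is impossible:
   the z-balance would force the common product c to be -1. *)
Lemma vertex_body_excluded (w c K k0 k1 k2 : R) (T p0 p1 p2 : V3) :
  0 < w -> 0 < k1 -> 0 < vz p1 -> c < -1 -> K = k0 + k1 + k2 -> p0 = e_z ->
  ldot p0 p1 = c -> ldot p0 p2 = c -> vz T = k0 * vz p0 + k1 * vz p1 + k2 * vz p2 ->
  balanced w c K k1 T p1 -> balanced w c K k2 T p2 ->
  balance_coef w c K k1 p1 = 0 -> balance_coef w c K k2 p2 = 0 -> False.
Proof.
  intros Hw Hk1 Hz1 Hc HK -> Hc1 Hc2 HTz Hb1 Hb2 HL1 HL2.
  rewrite ldot_e_z in Hc1, Hc2; cbn [vz e_z] in HTz.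
  destruct (balanced_zero_coef _ _ _ _ _ _ Hb1 HL1) as [_ [_ Hz1T]].
  destruct (balanced_zero_coef _ _ _ _ _ _ Hb2 HL2) as [_ [_ Hz2T]].
  unfold balance_coef in HL1, HL2.
  assert (Hz12 : vz p2 = vz p1) by nra.
  rewrite Hz12 in HL2, HTz.
  assert (Hk : (c + 1) * (k2 - k1) = 0) by lra.
  assert (Hk21 : k2 = k1) by nra.
  subst K k2 c.
  (* the z-balance of body 1, multiplied by z_1, against its zero coefficient *)
  assert (HwZ : w * vz p1 = k0 + 2 * k1 * vz p1) by lra.
  assert (Hq : k1 * ((2 * vz p1 + 1) * (vz p1 - 1)) = 0).
  { apply (f_equal (Rmult (vz p1))) in HwZ; lra. }
  destruct (Rmult_integral _ _ Hq) as [? | Hprod]; [lra|].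
  destruct (Rmult_integral _ _ Hprod); lra.
Qed.

Definition det3 (p q r : V3) : R :=
  vx p * (vy q * vz r - vy r * vz q) - vy p * (vx q * vz r - vx r * vz q)
  + vz p * (vx q * vy r - vx r * vy q).

Lemma det3_sq_lorentz_gram (p q r : V3) :
  - det3 p q r ^ 2 =
    ldot p p * (ldot q q * ldot r r - ldot q r ^ 2)
  - ldot p q * (ldot p q * ldot r r - ldot q r * ldot p r)
  + ldot p r * (ldot p q * ldot q r - ldot q q * ldot p r).
Proof. unfold det3, ldot; ring. Qed.

(* Three hyperboloid points with all products c < -1 are linearly independent:
   their Gram determinant (c+1)^2 (2c-1) is nonzero. *)
Lemma det3_equilateral (p q r : V3) (c : R) :
  ldot p p = -1 -> ldot q q = -1 -> ldot r r = -1 ->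
  ldot p q = c -> ldot p r = c -> ldot q r = c -> c < -1 -> det3 p q r <> 0.
Proof.
  intros Hp Hq Hr Hpq Hpr Hqr Hc H0.
  pose proof (det3_sq_lorentz_gram p q r) as G.
  rewrite H0, Hp, Hq, Hr, Hpq, Hpr, Hqr in G.
  assert (Hfac : (c + 1) ^ 2 * (2 * c - 1) = 0) by lra.
  destruct (Rmult_integral _ _ Hfac) as [Hsq | Hlin]; [| lra].
  exact (pow_nonzero (c + 1) 2 ltac:(lra) Hsq).
Qed.

(* If all coefficients are nonzero, all horizontal parts are parallel to that
   of T, so the three points are linearly dependent: impossible. *)
Lemma all_coef_nonzero_excluded (w c K k0 k1 k2 : R) (T p0 p1 p2 : V3) :
  c < -1 -> ldot p0 p0 = -1 -> ldot p1 p1 = -1 -> ldot p2 p2 = -1 ->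
  ldot p0 p1 = c -> ldot p0 p2 = c -> ldot p1 p2 = c ->
  balanced w c K k0 T p0 -> balanced w c K k1 T p1 -> balanced w c K k2 T p2 ->
  balance_coef w c K k0 p0 <> 0 -> balance_coef w c K k1 p1 <> 0 ->
  balance_coef w c K k2 p2 <> 0 -> False.
Proof.
  intros Hc H0 H1 H2 H01 H02 H12 Hb0 Hb1 Hb2 N0 N1 N2.
  apply (det3_equilateral p0 p1 p2 c); auto.
  destruct (balanced_components _ _ _ _ _ _ Hb0) as [X0 [Y0 _]].
  destruct (balanced_components _ _ _ _ _ _ Hb1) as [X1 [Y1 _]].
  destruct (balanced_components _ _ _ _ _ _ Hb2) as [X2 [Y2 _]].
  set (L0 := balance_coef w c K k0 p0) in *.
  set (L1 := balance_coef w c K k1 p1) in *.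
  set (L2 := balance_coef w c K k2 p2) in *.
  assert (Hx0 : vx p0 = - / L0 * vx T) by (rewrite X0; field; auto).
  assert (Hy0 : vy p0 = - / L0 * vy T) by (rewrite Y0; field; auto).
  assert (Hx1 : vx p1 = - / L1 * vx T) by (rewrite X1; field; auto).
  assert (Hy1 : vy p1 = - / L1 * vy T) by (rewrite Y1; field; auto).
  assert (Hx2 : vx p2 = - / L2 * vx T) by (rewrite X2; field; auto).
  assert (Hy2 : vy p2 = - / L2 * vy T) by (rewrite Y2; field; auto).
  unfold det3; rewrite Hx0, Hy0, Hx1, Hy1, Hx2, Hy2; ring.
Qed.

(* Hence some coefficient vanishes, and so the weighted sum T is vertical. *)
Lemma balanced_sum_vertical (w c K k0 k1 k2 : R) (T p0 p1 p2 : V3) :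
  c < -1 -> ldot p0 p0 = -1 -> ldot p1 p1 = -1 -> ldot p2 p2 = -1 ->
  ldot p0 p1 = c -> ldot p0 p2 = c -> ldot p1 p2 = c ->
  balanced w c K k0 T p0 -> balanced w c K k1 T p1 -> balanced w c K k2 T p2 ->
  vx T = 0 /\ vy T = 0.
Proof.
  intros Hc H0 H1 H2 H01 H02 H12 Hb0 Hb1 Hb2.
  destruct (Req_dec (balance_coef w c K k0 p0) 0) as [Z | N0];
    [destruct (balanced_zero_coef _ _ _ _ _ _ Hb0 Z); tauto |].
  destruct (Req_dec (balance_coef w c K k1 p1) 0) as [Z | N1];
    [destruct (balanced_zero_coef _ _ _ _ _ _ Hb1 Z); tauto |].
  destruct (Req_dec (balance_coef w c K k2 p2) 0) as [Z | N2];
    [destruct (balanced_zero_coef _ _ _ _ _ _ Hb2 Z); tauto |].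
  exfalso; apply (all_coef_nonzero_excluded w c K k0 k1 k2 T p0 p1 p2); assumption.
Qed.

(* If all coefficients vanish, the z-balances equalise the heights, and then
   the coefficients equalise the weights. *)
Lemma all_coef_zero (w c K k0 k1 k2 : R) (T p0 p1 p2 : V3) :
  0 < w -> c < -1 ->
  balanced w c K k0 T p0 -> balanced w c K k1 T p1 -> balanced w c K k2 T p2 ->
  balance_coef w c K k0 p0 = 0 -> balance_coef w c K k1 p1 = 0 ->
  balance_coef w c K k2 p2 = 0 ->
  vz p0 = vz p1 /\ vz p1 = vz p2 /\ k0 = k1 /\ k1 = k2.
Proof.
  intros Hw Hc Hb0 Hb1 Hb2 L0 L1 L2.
  destruct (balanced_zero_coef _ _ _ _ _ _ Hb0 L0) as [_ [_ Z0]].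
  destruct (balanced_zero_coef _ _ _ _ _ _ Hb1 L1) as [_ [_ Z1]].
  destruct (balanced_zero_coef _ _ _ _ _ _ Hb2 L2) as [_ [_ Z2]].
  assert (E01 : vz p0 = vz p1) by nra.
  assert (E12 : vz p1 = vz p2) by nra.
  unfold balance_coef in L0, L1, L2; rewrite <- E01 in L1; rewrite <- E12, <- E01 in L2.
  repeat split; nra.
Qed.

Theorem balanced_equilateral_symmetric (w c : R) (p : nat -> V3) (k : nat -> R) :
  0 < w -> c < -1 -> (forall i, (i < 3)%nat -> 0 < k i) ->
  (forall i, (i < 3)%nat -> on_hyperboloid (p i)) -> equilateral p c ->
  (forall i, (i < 3)%nat -> balanced w c (ksum3 k) (k i) (wsum3 k p) (p i)) ->
  vz (p 0%nat) = vz (p 1%nat) /\ vz (p 1%nat) = vz (p 2%nat) /\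
  k 0%nat = k 1%nat /\ k 1%nat = k 2%nat.
Proof.
  intros Hw Hc Hk Hh Heq Hb.
  set (T := wsum3 k p) in *; set (K := ksum3 k) in *.
  set (L := fun i => balance_coef w c K (k i) (p i)).
  assert (Hhyp : forall i, (i < 3)%nat -> ldot (p i) (p i) = -1) by (intros i Hi; apply (Hh i Hi)).
  assert (Hz : forall i, (i < 3)%nat -> 0 < vz (p i)) by (intros i Hi; apply (Hh i Hi)).
  assert (HTz : vz T = k 0%nat * vz (p 0%nat) + k 1%nat * vz (p 1%nat) + k 2%nat * vz (p 2%nat))
    by (cbn; ring).
  assert (HTh : vx T = 0 /\ vy T = 0).
  { apply (balanced_sum_vertical w c K (k 0%nat) (k 1%nat) (k 2%nat) T (p 0%nat) (p 1%nat) (p 2%nat));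
      first [ assumption | apply Hhyp; lia | apply Heq; lia | apply Hb; lia ]. }
  assert (Hax : forall i, (i < 3)%nat -> L i = 0 \/ p i = e_z).
  { intros i Hi; destruct (Req_dec (L i) 0) as [Z|N]; [left; exact Z | right].
    apply (balanced_on_axis w c K (k i) T); try apply Hh; try apply Hb; tauto. }
  (* Two bodies at the vertex would have Lorentz product -1. *)
  assert (Hpair : forall i j, (i < 3)%nat -> (j < 3)%nat -> i <> j ->
            p i = e_z -> p j = e_z -> False).
  { intros i j Hi Hj Hij Ai Aj; pose proof (Heq i j Hi Hj Hij) as Hij'.
    rewrite Ai, Aj in Hij'; unfold ldot in Hij'; cbn in Hij'; lra. }
  destruct (Hax 0%nat ltac:(lia)) as [L0|A0], (Hax 1%nat ltac:(lia)) as [L1|A1],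
    (Hax 2%nat ltac:(lia)) as [L2|A2];
    (* two bodies at the vertex *)
    try (exfalso; match goal with
                  | A : p ?i = e_z, B : p ?j = e_z |- _ => apply (Hpair i j); try assumption; lia
                  end);
    (* exactly one body a at the vertex, the others b, d with zero coefficient *)
    try (exfalso; match goal with
         | A : p ?a = e_z, B : L ?b = 0, C : L ?d = 0 |- _ =>
             apply (vertex_body_excluded w c K (k a) (k b) (k d) T (p a) (p b) (p d));
             first [ assumption | (apply Heq || apply Hb || apply Hk || apply Hz); lia
                   | unfold K, ksum3; ring | rewrite HTz; ring ]
         end).
  (* all three coefficients vanish *)
  apply (all_coef_zero w c K _ _ _ T); try assumption; apply Hb; lia.
Qed.

Theorem mainTheorem15 (m : nat -> R) (omega : R) (alpha rho : nat -> R) :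
  0 < m 0%nat -> 0 < m 1%nat -> 0 < m 2%nat ->
  omega <> 0 ->
  0 <= rho 0%nat -> 0 <= rho 1%nat -> 0 <= rho 2%nat ->
  nbody_solution 3 m (ere_pos omega alpha rho) ->
  (forall t,
     hdist (ere_pos omega alpha rho 0 t) (ere_pos omega alpha rho 1 t)
       = hdist (ere_pos omega alpha rho 0 t) (ere_pos omega alpha rho 2 t) /\
     hdist (ere_pos omega alpha rho 1 t) (ere_pos omega alpha rho 2 t)
       = hdist (ere_pos omega alpha rho 0 t) (ere_pos omega alpha rho 1 t)) ->
  sqrt (rho 0%nat ^ 2 + 1) = sqrt (rho 1%nat ^ 2 + 1) /\
  sqrt (rho 1%nat ^ 2 + 1) = sqrt (rho 2%nat ^ 2 + 1) /\
  m 0%nat = m 1%nat /\ m 1%nat = m 2%nat.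
Proof.
  intros Hm0 Hm1 Hm2 Hom _ _ _ Hsol Hdist.
  set (p := fun i => ere_pos omega alpha rho i 0).
  assert (Hh : forall i, (i < 3)%nat -> on_hyperboloid (p i)).
  { intros i Hi; destruct Hsol as [v [a [_ [Hq _]]]].
    destruct (Hq 0 i Hi) as [Hpp [Hz _]]; split; assumption. }
  destruct (Hdist 0) as [D1 D2].
  destruct (equal_distances_equilateral p Hh) as [Heq Hc]; try assumption.
  { destruct Hsol as [v [a [_ [_ [Hcol _]]]]]; intros i j; apply Hcol. }
  set (c := ldot (p 0%nat) (p 1%nat)) in *.
  destruct (balanced_equilateral_symmetric (omega * omega) c p (weight m c))
    as [Z01 [Z12 [K01 K12]]]; try assumption.
  - nra.
  - intros [|[|[|i]]] Hi; try lia; apply weight_pos; assumption.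
  - intros i Hi; exact (ere_balanced m omega alpha rho c 0 i Hsol Hi Heq).
  - repeat split; [exact Z01 | exact Z12 | apply (weight_inj m c); assumption ..].
Qed.
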